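(* Consider the most-profitable-augmenting-path algorithm (described in the context) run on an instance of the maximum-weight online bipartite left-perfect matching problem with budget $k=4$. Then for each $v\in R$, the loss $\ell^t_v$ is non-decreasing in $t$ for $t=1,\dots,n+1$.
   Context: Problem: $G=(L\cup R,E)$ is a complete bipartite graph with $n:=|L|\le|R|$ and edge weights $w:E\to\mathbb{Q}_{\ge0}$. The algorithm initially knows $R$; at timestep $t=1,\dots,n$ the vertex $u_t\in L$ arrives with all incident edges and their weights. At the end of each timestep the algorithm outputs a left-perfect matching of the revealed graph (every arrived vertex of $L$ matched), obtainable from the previous one (empty initially) by at most $4$ (re)assignments (the number of vertices of nonzero degree in the symmetric difference of the two matchings); matched vertices stay matched. Algorithm: when $u_t$ arrives, among all augmenting paths with respect to the current matching $M$ that contain $u_t$ and have length at most $3$, choose one $P$ maximizing the weight of $M\triangle P$ minus the weight of $M$, and output $M\triangle P$. Notation: $M_t$ is the matching at the beginning of timestep $t$ (output at time $t-1$; $M_1=\emptyset$, $M_{n+1}$ is the final matching); $R^t_{\mathsf{exp}}$ is the set of vertices of $R$ not covered by $M_t$; $M_t(v)$ is the partner of $v$ in $M_t$. For $v\in R$, the loss $\ell^t_v:=w(M_t(v),v)-\max_{v'\in R^t_{\mathsf{exp}}}w(M_t(v),v')$ if $v$ is matched in $M_t$, and $\ell^t_v:=0$ otherwise, with the convention $\max\emptyset:=0$. *)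

From HB Require Import structures.
From mathcomp Require Import all_boot all_order all_algebra.
Set Implicit Arguments. Unset Strict Implicit. Unset Printing Implicit Defensive.
Import Order.TTheory GRing.Theory Num.Theory.
Local Open Scope ring_scope.

(* Left side L = 'I_n, vertex u_t (arriving at timestep t, 1-based) is the
   ordinal with value t-1.  Right side R is a finType. *)

Section Matching.
Variables (n : nat) (R : finType).
Notation V := ('I_n + R)%type.
Notation E := ('I_n * R)%type.

Definition covers (M : {set E}) (x : V) : bool :=
  match x with
  | inl u => [exists e in M, e.1 == u]
  | inr v => [exists e in M, e.2 == v]
  end.

Definition edge_of (x y : V) : option E :=
  match x, y with
  | inl u, inr v => Some (u, v)
  | inr v, inl u => Some (u, v)
  | _, _ => None
  end.

Definition revealed (t : nat) (x : V) : bool :=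
  match x with
  | inl u => (val u < t)%N
  | inr _ => true
  end.

Definition path_edges (x0 : V) (s : seq V) : seq E :=
  pmap id (pairmap edge_of x0 s).

Definition path_edge_set (x0 : V) (s : seq V) : {set E} :=
  [set e in path_edges x0 s].

(* x0 :: s is an augmenting path w.r.t. M in the graph revealed at time t:
   a simple path (distinct vertices, consecutive vertices adjacent) with at
   least one edge, both endpoints uncovered by M, whose edges alternate
   between non-matching and matching edges (starting with non-matching). *)
Definition augmenting_path (t : nat) (M : {set E}) (x0 : V) (s : seq V) : Prop :=
  [/\ uniq (x0 :: s) && (s != [::]),
      size (path_edges x0 s) = size s,
      all (revealed t) (x0 :: s),
      ~~ covers M x0 && ~~ covers M (last x0 s)
    & all (fun p => (p.1 \in M) == odd p.2)
          (zip (path_edges x0 s) (iota 0 (size s)))].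

Definition contains_arrival (t : nat) (x0 : V) (s : seq V) : bool :=
  [exists u : 'I_n, (val u == t.-1)%N && (inl u \in x0 :: s)].

Definition symdiff (A B : {set E}) : {set E} := (A :\: B) :|: (B :\: A).

Definition weight (w : 'I_n -> R -> rat) (M : {set E}) : rat :=
  \sum_(e in M) w e.1 e.2.

Definition admissible (t : nat) (M : {set E}) (x0 : V) (s : seq V) : Prop :=
  [/\ augmenting_path t M x0 s, (size s <= 3)%N & contains_arrival t x0 s].

Definition alg_step (w : 'I_n -> R -> rat) (t : nat) (M M' : {set E}) : Prop :=
  exists x0 s,
    [/\ admissible t M x0 s,
        M' = symdiff M (path_edge_set x0 s)
      & forall y0 s', admissible t M y0 s' ->
          weight w (symdiff M (path_edge_set y0 s')) - weight w M
          <= weight w M' - weight w M].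

(* loss of v in R w.r.t. matching M; max over the empty set is 0
   (weights are nonnegative, so max with neutral 0 is the true max) *)
Definition loss (w : 'I_n -> R -> rat) (M : {set E}) (v : R) : rat :=
  match [pick e in M | e.2 == v] with
  | Some e => w e.1 v - \big[Num.max/0]_(v' : R | ~~ covers M (inr v')) w e.1 v'
  | None => 0
  end.

End Matching.

(* At the start of step t the arriving vertex u_t is unmatched and every matched
   left vertex arrived earlier.  Hence an augmenting path of length at most 3
   through u_t is either an edge u_t v to a free v, or a path u_t v u v' that
   hands v to u_t and moves its partner u to a free v'.  Either way the set of
   free right vertices only shrinks, so the loss of a vertex that keeps its
   partner can only grow.  For the at most two vertices whose partner changes,
   comparing the chosen path with the competing paths u_t z and u_t v u z
   (z free) gives exactly the inequality needed. *)

From mathcomp Require Import all_boot all_order all_algebra.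
From mathcomp Require Import zify lra.
Set Implicit Arguments. Unset Strict Implicit. Unset Printing Implicit Defensive.
Import Order.TTheory GRing.Theory Num.Theory.
Local Open Scope ring_scope.

Section MostProfitablePath.
Variables (n : nat) (R : finType) (w : 'I_n -> R -> rat).
Hypothesis w_ge0 : forall u v, 0 <= w u v.
Notation E := ('I_n * R)%type.

Definition matching (M : {set E}) : Prop :=
  {in M &, forall e e', e.1 = e'.1 \/ e.2 = e'.2 -> e = e'}.

Lemma coversLP (M : {set E}) u :
  reflect (exists v, (u, v) \in M) (covers M (inl u)).
Proof.
apply: (iffP existsP) => [[[u' v] /andP[huv /eqP /= <-]]|[v huv]]; first by exists v.
by exists (u, v); rewrite huv eqxx.
Qed.

Lemma coversRP (M : {set E}) v :
  reflect (exists u, (u, v) \in M) (covers M (inr v)).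
Proof.
apply: (iffP existsP) => [[[u v'] /andP[huv /eqP /= <-]]|[u huv]]; first by exists u.
by exists (u, v); rewrite huv eqxx.
Qed.

Lemma coversL_setU1 (M : {set E}) e u :
  covers (e |: M) (inl u) = (e.1 == u) || covers M (inl u).
Proof.
case: e => u0 v0; apply/coversLP/orP => [[v]|[/eqP <-|/coversLP[v huv]]].
- by case/setU1P => [[-> _]|huv]; [left | right; apply/coversLP; exists v].
- by exists v0; rewrite setU11.
- by exists v; rewrite setU1r.
Qed.

Lemma coversR_setU1 (M : {set E}) e v :
  covers (e |: M) (inr v) = (e.2 == v) || covers M (inr v).
Proof.
case: e => u0 v0; apply/coversRP/orP => [[u]|[/eqP <-|/coversRP[u huv]]].
- by case/setU1P => [[_ ->]|huv]; [left | right; apply/coversRP; exists u].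
- by exists u0; rewrite setU11.
- by exists u; rewrite setU1r.
Qed.

Lemma coversL_setD1 (M : {set E}) u v x : matching M -> (u, v) \in M ->
  covers (M :\ (u, v)) (inl x) = (x != u) && covers M (inl x).
Proof.
move=> hM huv; apply/coversLP/andP => [[y /setD1P[ne hy]]|[nx /coversLP[y hy]]].
  split; last by apply/coversLP; exists y.
  by apply: contra ne => /eqP exu; subst x; apply/eqP/hM => //; left.
by exists y; rewrite !inE hy andbT; apply: contra nx => /eqP[->].
Qed.

Lemma coversR_setD1 (M : {set E}) u v x : matching M -> (u, v) \in M ->
  covers (M :\ (u, v)) (inr x) = (x != v) && covers M (inr x).
Proof.
move=> hM huv; apply/coversRP/andP => [[y /setD1P[ne hy]]|[nx /coversRP[y hy]]].
  split; last by apply/coversRP; exists y.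
  by apply: contra ne => /eqP exv; subst x; apply/eqP/hM => //; right.
by exists y; rewrite !inE hy andbT; apply: contra nx => /eqP[_ ->].
Qed.

Lemma matching0 : matching set0.
Proof. by move=> e e'; rewrite in_set0. Qed.

Lemma matching_setU1 (M : {set E}) e : matching M ->
  ~~ covers M (inl e.1) -> ~~ covers M (inr e.2) -> matching (e |: M).
Proof.
case: e => u v hM /coversLP hu /coversRP hv /= e e'.
have apart f : f \in M -> f.1 <> u /\ f.2 <> v.
  by case: f => a b hf; split => /= hab; [apply: hu; exists b | apply: hv; exists a];
    rewrite -hab.
case/setU1P => [->|he] /setU1P[->|he'] // heq; last exact: hM.
- by have [h1 h2] := apart _ he'; case: heq => h; [case: h1 | case: h2].
- by have [h1 h2] := apart _ he; case: heq => h; [case: h1 | case: h2].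
Qed.

Lemma matching_subset (A B : {set E}) : matching A -> B \subset A -> matching B.
Proof. by move=> hA /subsetP sBA e e' /sBA he /sBA he'; apply: hA. Qed.

Definition best_free_weight (M : {set E}) (u : 'I_n) : rat :=
  \big[Num.max/0]_(v | ~~ covers M (inr v)) w u v.

Lemma le_best_free_weight M u v :
  ~~ covers M (inr v) -> w u v <= best_free_weight M u.
Proof. exact: (@le_bigmax_cond _ _ _ 0 v (fun v => ~~ covers M (inr v))). Qed.

Lemma best_free_weight_le M u c : 0 <= c ->
  (forall v, ~~ covers M (inr v) -> w u v <= c) -> best_free_weight M u <= c.
Proof. exact: bigmax_le. Qed.

Lemma best_free_weight_antitone M M' u :
  (forall v, ~~ covers M' (inr v) -> ~~ covers M (inr v)) ->
  best_free_weight M' u <= best_free_weight M u.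
Proof. exact: sub_bigmax. Qed.

Lemma loss_matched M u v :
  matching M -> (u, v) \in M -> loss w M v = w u v - best_free_weight M u.
Proof.
move=> hM huv; rewrite /loss; case: pickP => [e /andP[he /eqP ev]|/(_ (u, v))].
  by have -> : e = (u, v) by apply: hM => //; right.
by rewrite huv eqxx.
Qed.

Lemma loss_free M v : ~~ covers M (inr v) -> loss w M v = 0.
Proof.
move=> /coversRP hv; rewrite /loss; case: pickP => // -[u v'] /andP[huv /eqP /= ev].
by case: hv; exists u; rewrite -ev.
Qed.

Lemma loss_le_kept M M' x : matching M -> matching M' ->
  (forall v, ~~ covers M' (inr v) -> ~~ covers M (inr v)) ->
  (forall u, ((u, x) \in M') = ((u, x) \in M)) ->
  loss w M x <= loss w M' x.
Proof.
move=> hM hM' free' kept; have [[u hux]|hx] := coversRP M x.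
  rewrite (loss_matched hM hux) (loss_matched (u := u) hM'); last by rewrite kept.
  by rewrite lerD2l lerN2 best_free_weight_antitone.
have hx' : ~~ covers M' (inr x).
  by apply/coversRP => -[u]; rewrite kept => hux; apply: hx; exists u.
by rewrite (loss_free hx') loss_free //; apply/coversRP.
Qed.

Lemma loss_le_augment1 M u v :
  matching M -> ~~ covers M (inl u) -> ~~ covers M (inr v) ->
  (forall z, ~~ covers M (inr z) -> w u z <= w u v) ->
  forall x, loss w M x <= loss w ((u, v) |: M) x.
Proof.
move=> hM hu hv best x; have hM' := @matching_setU1 M (u, v) hM hu hv.
have free' z : ~~ covers ((u, v) |: M) (inr z) -> ~~ covers M (inr z).
  by rewrite coversR_setU1 negb_or => /andP[].
have [->|nxv] := eqVneq x v.
  rewrite (loss_free hv) (loss_matched hM' (setU11 _ _)) subr_ge0.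
  by apply: best_free_weight_le => // z /free' /best.
by apply: loss_le_kept => // y; rewrite !inE xpair_eqE (negbTE nxv) andbF.
Qed.

Definition augment3 (M : {set E}) ut u v v' : {set E} :=
  (u, v') |: ((ut, v) |: (M :\ (u, v))).

Lemma coversR_augment3 M ut u v v' x : matching M -> (u, v) \in M ->
  covers (augment3 M ut u v v') (inr x) = (v' == x) || covers M (inr x).
Proof.
move=> hM huv; rewrite /augment3 !coversR_setU1 (coversR_setD1 _ hM huv) /=.
have [->|//] := eqVneq x v.
by rewrite orbT; apply/esym/orP; right; apply/coversRP; exists u.
Qed.

Lemma matching_augment3 M ut u v v' :
  matching M -> ~~ covers M (inl ut) -> (u, v) \in M -> ~~ covers M (inr v') ->
  matching (augment3 M ut u v v').
Proof.
move=> hM hut huv hv'.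
have nut : ut != u by apply: contraNneq hut => ->; apply/coversLP; exists v.
have nvv' : v != v' by apply: contraNneq hv' => <-; apply/coversRP; exists u.
apply: matching_setU1.
- apply: matching_setU1; first exact: matching_subset hM (subD1set _ _).
    by rewrite coversL_setD1 // (negbTE hut) andbF.
  by rewrite coversR_setD1 // eqxx.
- by rewrite coversL_setU1 coversL_setD1 // eqxx (negbTE nut).
- by rewrite coversR_setU1 coversR_setD1 // (negbTE nvv') (negbTE hv') andbF.
Qed.

Lemma mem_augment3_kept M ut u v v' y x : x != v -> x != v' ->
  ((y, x) \in augment3 M ut u v v') = ((y, x) \in M).
Proof. by move=> nxv nxv'; rewrite !inE !xpair_eqE (negbTE nxv) (negbTE nxv') !andbF. Qed.

Lemma loss_le_augment3 M ut u v v' :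
  matching M -> ~~ covers M (inl ut) -> (u, v) \in M -> ~~ covers M (inr v') ->
  (forall z, ~~ covers M (inr z) -> w ut z <= w ut v + w u v' - w u v) ->
  (forall z, ~~ covers M (inr z) -> w u z <= w u v') ->
  forall x, loss w M x <= loss w (augment3 M ut u v v') x.
Proof.
move=> hM hut huv hv' best1 best3 x; set M' := augment3 M ut u v v'.
have hM' : matching M' by apply: matching_augment3.
have free' z : ~~ covers M' (inr z) -> ~~ covers M (inr z).
  by rewrite coversR_augment3 // negb_or => /andP[].
have [->|nxv] := eqVneq x v.
  have utvM' : (ut, v) \in M' by rewrite !inE eqxx orbT.
  rewrite (loss_matched hM huv) (loss_matched hM' utvM').
  suff : best_free_weight M' ut <= w ut v - w u v + best_free_weight M u by lra.
  have := le_best_free_weight u hv'; have := best1 _ hv'; have := w_ge0 ut v'.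
  by move=> *; apply: best_free_weight_le => [|z /free' /best1]; lra.
have [->|nxv'] := eqVneq x v'.
  rewrite (loss_free hv') (loss_matched hM' (setU11 _ _)) subr_ge0.
  by apply: best_free_weight_le => // z /free' /best3.
by apply: loss_le_kept => // y; rewrite mem_augment3_kept.
Qed.

Lemma weight_setU1 (M : {set E}) e :
  e \notin M -> weight w (e |: M) = w e.1 e.2 + weight w M.
Proof. exact: big_setU1. Qed.

Lemma weight_setD1 (M : {set E}) e :
  e \in M -> weight w M = w e.1 e.2 + weight w (M :\ e).
Proof. exact: big_setD1. Qed.

Lemma symdiff_set1 (M : {set E}) e : e \notin M -> symdiff M [set e] = e |: M.
Proof.
move=> he; apply/setP => f; rewrite /symdiff !inE.
by have [->|_] := eqVneq f e; rewrite ?(negbTE he) //= andbF orbF.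
Qed.

Lemma symdiff_augment3 (M : {set E}) ut u v v' :
  (u, v) \in M -> (ut, v) \notin M -> (u, v') \notin M ->
  symdiff M [set (ut, v); (u, v); (u, v')] = augment3 M ut u v v'.
Proof.
move=> huv hutv huv'; apply/setP => f; rewrite /symdiff !inE.
case fM: (f \in M) => /=.
  have -> : (f == (ut, v)) = false by apply: contraNF hutv => /eqP <-.
  have -> : (f == (u, v')) = false by apply: contraNF huv' => /eqP <-.
  by rewrite !(orbF, orFb, andbT).
have -> : (f == (u, v)) = false by apply: contraFF fM => /eqP ->.
by rewrite !(orbF, orFb, andbF, andbT) orbC.
Qed.

Lemma weight_augment3 (M : {set E}) ut u v v' :
  (u, v) \in M -> (ut, v) \notin M -> (u, v') \notin M -> v != v' ->
  weight w (augment3 M ut u v v') = weight w M + w ut v + w u v' - w u v.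
Proof.
move=> huv hutv huv' nvv'; rewrite [weight w M](weight_setD1 huv) /augment3.
rewrite !weight_setU1 /=; first lra.
  by rewrite !inE negb_and hutv orbT.
by rewrite !inE !xpair_eqE [v' == v]eq_sym (negbTE nvv') andbF (negbTE huv') andbF.
Qed.

Lemma path_edge_set_edge (u : 'I_n) (v : R) :
  path_edge_set (inl u) [:: inr v] = [set (u, v)].
Proof. by apply/setP => e; rewrite /path_edge_set !inE. Qed.

Lemma path_edge_set_path3 (ut u : 'I_n) (v v' : R) :
  path_edge_set (inl ut) [:: inr v; inl u; inr v'] = [set (ut, v); (u, v); (u, v')].
Proof. by apply/setP => e; rewrite /path_edge_set !inE orbA. Qed.

Lemma admissible_edge t (M : {set E}) ut v : val ut = t.-1 -> (0 < t)%N ->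
  ~~ covers M (inl ut) -> ~~ covers M (inr v) -> admissible t M (inl ut) [:: inr v].
Proof.
move=> hut ht hut_free hv.
have utvM : (ut, v) \notin M by apply: contra hut_free => h; apply/coversLP; exists v.
split => //; last by apply/existsP; exists ut; rewrite hut eqxx !inE eqxx.
split => //=.
- by rewrite hut andbT ltn_predL.
- exact/andP.
- by rewrite (negbTE utvM).
Qed.

Lemma admissible_path3 t (M : {set E}) ut u v v' :
  val ut = t.-1 -> (0 < t)%N -> (val u < t)%N ->
  ~~ covers M (inl ut) -> (u, v) \in M -> ~~ covers M (inr v') ->
  admissible t M (inl ut) [:: inr v; inl u; inr v'].
Proof.
move=> hut ht hu hut_free huv hv'.
have utvM : (ut, v) \notin M by apply: contra hut_free => h; apply/coversLP; exists v.
have uv'M : (u, v') \notin M by apply: contra hv' => h; apply/coversRP; exists u.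
have nut : ut != u by apply: contraNneq hut_free => ->; apply/coversLP; exists v.
have nvv' : v != v' by apply: contraNneq hv' => <-; apply/coversRP; exists u.
split => //; last by apply/existsP; exists ut; rewrite hut eqxx !inE eqxx.
split => //=.
- by rewrite !inE /= !(inj_eq inl_inj, inj_eq inr_inj) (negbTE nut) nvv'.
- by rewrite hut ltn_predL ht hu.
- exact/andP.
- by rewrite huv (negbTE utvM) (negbTE uv'M).
Qed.

Lemma admissible_cases t (M : {set E}) x0 s ut :
  val ut = t.-1 -> ~~ covers M (inl ut) -> admissible t M x0 s ->
  (exists2 v, ~~ covers M (inr v) & path_edge_set x0 s = [set (ut, v)]) \/
  (exists u v v', [/\ (u, v) \in M, ~~ covers M (inr v') &
                     path_edge_set x0 s = [set (ut, v); (u, v); (u, v')]]).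
Proof.
move=> hut hut_free [[/andP[_ s_nil] sizes _ /andP[free0 free_last] alt] size_s arrival].
have {arrival} : inl ut \in x0 :: s.
  case/existsP: arrival => u /andP[/eqP hu]; suff -> : u = ut by [].
  by apply: val_inj; rewrite hu hut.
rewrite /path_edge_set.
case: s s_nil sizes free_last alt size_s => [|a [|b [|c [|? ?]]]] //= _.
- case: x0 a free0 => [p|q] [p'|q'] //= free0 _ free_last alt _.
  + rewrite !inE => /orP[/eqP[<-]|/eqP//].
    by left; exists q' => //; apply/setP => e; rewrite !inE.
  + rewrite !inE => /orP[/eqP//|/eqP[<-]].
    by left; exists q => //; apply/setP => e; rewrite !inE.
- (* the second edge is matched, so the last vertex is covered *)
  case: x0 a b free0 => [p|q] [p'|q'] [p''|q''] //= free0 _ free_last alt _.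
  + case/and3P: alt => _ /eqP covered _; case/negP: free_last.
    by apply/coversLP; exists q'.
  + case/and3P: alt => _ /eqP covered _; case/negP: free_last.
    by apply/coversRP; exists p'.
- (* the inner vertices are covered by the middle edge, so u_t is an endpoint *)
  case: x0 a b c free0 => [p|q] [p'|q'] [p''|q''] [p3|q3] //= free0 _ free_last alt _;
    case/and4P: alt => _ /eqP covered _ _; rewrite !inE.
  + case/or4P => [/eqP[<-]|/eqP//|/eqP[ut_p'']|/eqP//].
      by right; exists p'', q', q3; split => //; apply/setP => e; rewrite !inE orbA.
    by case/negP: hut_free; apply/coversLP; exists q'; rewrite ut_p''.
  + case/or4P => [/eqP//|/eqP[ut_p']|/eqP//|/eqP[<-]].
      by case/negP: hut_free; apply/coversLP; exists q''; rewrite ut_p'.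
    right; exists p', q'', q; split => //; apply/setP => e.
    by rewrite !inE orbC (orbC (e == (p', q''))).
Qed.

(* [u_t] is the left vertex of index [t.-1]. *)
Definition matching_before (t : nat) (M : {set E}) : Prop :=
  matching M /\ {in M, forall e : E, (val e.1 < t.-1)%N}.

Lemma alg_step_loss_le t M M' (ut : 'I_n) : val ut = t.-1 -> (0 < t)%N ->
  matching_before t M -> alg_step w t M M' ->
  matching_before t.+1 M' /\ forall x, loss w M x <= loss w M' x.
Proof.
move=> hut ht [hM before] [x0 [s [adm ->{M'} best]]].
have hut_free : ~~ covers M (inl ut).
  by apply/coversLP => -[v /before]; rewrite /= hut ltnn.
have utM y : (ut, y) \notin M by apply: contra hut_free => h; apply/coversLP; exists y.
have before' e : e \in M -> (val e.1 < t.+1.-1)%N.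
  by move=> /before lt_e; apply: leq_trans lt_e (leq_pred t).
have ut_lt : (val ut < t.+1.-1)%N by rewrite hut ltn_predL.
have [[v hv edges]|[u [v [v' [huv hv' edges]]]]] := admissible_cases hut hut_free adm;
  rewrite {}edges in best *.
  have best_v z : ~~ covers M (inr z) -> w ut z <= w ut v.
    move=> hz; have := best _ _ (admissible_edge hut ht hut_free hz).
    by rewrite path_edge_set_edge !symdiff_set1 // !weight_setU1 // !addrK.
  rewrite symdiff_set1 //; split; last exact: loss_le_augment1.
  split; first exact: (@matching_setU1 M (ut, v)).
  by move=> e /setU1P[-> //|/before'].
have u_lt : (val u < t)%N by apply: before' huv.
have nvv' : v != v' by apply: contraNneq hv' => <-; apply/coversRP; exists u.
have uv'M : (u, v') \notin M by apply: contra hv' => h; apply/coversRP; exists u.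
have best1 z : ~~ covers M (inr z) -> w ut z <= w ut v + w u v' - w u v.
  move=> hz; have := best _ _ (admissible_edge hut ht hut_free hz).
  rewrite path_edge_set_edge symdiff_set1 // weight_setU1 //.
  by rewrite symdiff_augment3 // weight_augment3 //; lra.
have best3 z : ~~ covers M (inr z) -> w u z <= w u v'.
  move=> hz; have := best _ _ (admissible_path3 hut ht u_lt hut_free huv hz).
  have nvz : v != z by apply: contraNneq hz => <-; apply/coversRP; exists u.
  have uzM : (u, z) \notin M by apply: contra hz => h; apply/coversRP; exists u.
  by rewrite path_edge_set_path3 !symdiff_augment3 // !weight_augment3 //; lra.
rewrite symdiff_augment3 //; split; last exact: loss_le_augment3.
split; first exact: matching_augment3.
by move=> e; rewrite !inE => /or3P[/eqP-> //|/eqP-> //|/andP[_ /before']].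
Qed.

End MostProfitablePath.

Section AlgorithmRun.
Variables (n : nat) (R : finType) (w : 'I_n -> R -> rat).
Hypothesis w_ge0 : forall u v, 0 <= w u v.
Variable M : nat -> {set 'I_n * R}.
Hypothesis M1 : M 1%N = set0.
Hypothesis hstep : forall t : nat, (1 <= t <= n)%N -> alg_step w t (M t) (M t.+1).

Lemma run_matching_before k : (k <= n)%N -> matching_before k.+1 (M k.+1).
Proof.
elim: k => [_|k IH lt_kn].
  by rewrite M1; split=> [|e]; [exact: matching0 | rewrite in_set0].
by have [] := alg_step_loss_le w_ge0 (t := k.+1) (ut := Ordinal lt_kn) erefl erefl
  (IH (ltnW lt_kn)) (@hstep k.+1 lt_kn).
Qed.

Lemma run_loss_le_succ k v : (k < n)%N -> loss w (M k.+1) v <= loss w (M k.+2) v.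
Proof.
move=> lt_kn; have [_ ->] // := alg_step_loss_le w_ge0 (t := k.+1) (ut := Ordinal lt_kn)
  erefl erefl (run_matching_before (ltnW lt_kn)) (@hstep k.+1 lt_kn).
Qed.

End AlgorithmRun.

Theorem lemma4 (n : nat) (R : finType) (w : 'I_n -> R -> rat)
  (w_ge0 : forall u v, 0 <= w u v) (hnR : (n <= #|R|)%N)
  (M : nat -> {set 'I_n * R})
  (M1 : M 1%N = set0)
  (hstep : forall t : nat, (1 <= t <= n)%N -> alg_step w t (M t) (M t.+1)) :
  forall (v : R) (t1 t2 : nat), (1 <= t1)%N -> (t1 <= t2)%N -> (t2 <= n.+1)%N ->
    loss w (M t1) v <= loss w (M t2) v.
Proof.
move=> v t1 t2 t1_pos le_t12 t2_le.
pose D := [pred k | (0 < k <= n.+1)%N].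
have mono : {in D &, {homo (fun k => loss w (M k) v) : i j / (i <= j)%N >-> i <= j}}.
  apply: homo_leq_in => [x|y x z|i j /andP[i_pos _] /andP[_ j_le] k|[|k] //].
  - exact: lexx.
  - exact: le_trans.
  - by rewrite inE; lia.
  - by move=> _ /andP[_ lt_kn]; exact: run_loss_le_succ.
by apply: mono; rewrite // !inE; lia.
Qed.
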